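(* Let $\mathcal{C}$ be a Garside category of finite type, let $\mathcal{G}$ be its enveloping Garside groupoid, let $x$ be an object of $\mathcal{G}$, and let $G=\mathcal{G}_x$ be the isotropy group at $x$ (a weak Garside group of finite type). Then $G$ acts geometrically (properly and cocompactly by graph automorphisms) on a Helly graph.
   Context: Let $\mathcal{C}$ be a small category; arrows compose like paths: $f\colon x\to y$ and $g\colon y\to z$ compose to $fg\colon x\to z$. A nontrivial (non-identity) morphism is an atom if it cannot be written as a product of two non-identity morphisms. $\mathcal{C}$ is cancellative if $afb=agb$ implies $f=g$, and homogeneous if there is $l$ from morphisms to $\mathbb{Z}_{\ge 0}$ with $l(fg)=l(f)+l(g)$ and $l(f)=0$ iff $f$ is an identity. For morphisms $f,g$ write $f\preccurlyeq g$ if $g=fz$ for some morphism $z$, and $g\succcurlyeq f$ if $g=zf$ for some morphism $z$; $\mathcal{C}_{x\to}$ (resp. $\mathcal{C}_{\to x}$) denotes the morphisms with source (resp. target) $x$. Given an automorphism $\phi$ of $\mathcal{C}$ and a natural transformation $\Delta$ from the identity functor to $\phi$, write $\Delta_x\colon x\to\phi(x)$ and $\Delta^x:=\Delta_{\phi^{-1}(x)}\colon\phi^{-1}(x)\to x$. A morphism $f\colon x\to y$ is simple if there is $f^*\colon y\to\phi(x)$ with $ff^*=\Delta_x$. $(\mathcal{C},\phi,\Delta)$ is a homogeneous categorical Garside structure if $\mathcal{C}$ is homogeneous and cancellative, all atoms are simple, and for every object $x$ the posets $(\mathcal{C}_{x\to},\preccurlyeq)$ and $(\mathcal{C}_{\to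 x},\succcurlyeq)$ are lattices. A Garside category is a category admitting such $\phi,\Delta$; it has finite type if it has finitely many simple morphisms. The Garside groupoid $\mathcal{G}$ is the enveloping groupoid of $\mathcal{C}$ (obtained by formally inverting all morphisms; $\mathcal{C}\to\mathcal{G}$ is injective). The isotropy group $\mathcal{G}_x$ is the group of morphisms $x\to x$. A graph is Helly if every family of pairwise intersecting (combinatorial) balls in its vertex set has nonempty intersection. *)

From Stdlib Require Import List.

(* comp f g = "fg" : first f, then g; meaningful when tgt f = src g.  *)
Record Cat : Type := {
  ob : Type;
  mor : Type;
  src : mor -> ob;
  tgt : mor -> ob;
  idm : ob -> mor;
  comp : mor -> mor -> mor;
  src_id : forall o, src (idm o) = o;
  tgt_id : forall o, tgt (idm o) = o;
  src_comp : forall f g, tgt f = src g -> src (comp f g) = src f;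
  tgt_comp : forall f g, tgt f = src g -> tgt (comp f g) = tgt g;
  id_comp : forall f, comp (idm (src f)) f = f;
  comp_id : forall f, comp f (idm (tgt f)) = f;
  comp_assoc : forall f g h, tgt f = src g -> tgt g = src h ->
    comp (comp f g) h = comp f (comp g h)
}.

Arguments src {c}.
Arguments tgt {c}.
Arguments idm {c}.
Arguments comp {c}.

Record Functor (C D : Cat) : Type := {
  fob : ob C -> ob D;
  fmor : mor C -> mor D;
  fsrc : forall f, src (fmor f) = fob (src f);
  ftgt : forall f, tgt (fmor f) = fob (tgt f);
  fid : forall o, fmor (idm o) = idm (fob o);
  fcomp : forall f g, tgt f = src g -> fmor (comp f g) = comp (fmor f) (fmor g)
}.

Arguments fob {C D}.
Arguments fmor {C D}.

Definition is_id {C : Cat} (f : mor C) : Prop := exists o, f = idm o.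

Definition is_automorphism {C : Cat} (phi : Functor C C) : Prop :=
  exists psi : Functor C C,
    (forall o, fob psi (fob phi o) = o) /\ (forall o, fob phi (fob psi o) = o) /\
    (forall f, fmor psi (fmor phi f) = f) /\ (forall f, fmor phi (fmor psi f) = f).

Definition is_nat_trans_id {C : Cat} (phi : Functor C C) (Delta : ob C -> mor C) : Prop :=
  (forall o, src (Delta o) = o /\ tgt (Delta o) = fob phi o) /\
  (forall f, comp f (Delta (tgt f)) = comp (Delta (src f)) (fmor phi f)).

Definition is_atom {C : Cat} (f : mor C) : Prop :=
  ~ is_id f /\
  ~ (exists g h, tgt g = src h /\ ~ is_id g /\ ~ is_id h /\ f = comp g h).

Definition cancellative (C : Cat) : Prop :=
  forall a f g b : mor C,
    tgt a = src f -> tgt f = src b -> tgt a = src g -> tgt g = src b ->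
    comp (comp a f) b = comp (comp a g) b -> f = g.

Definition homogeneous (C : Cat) : Prop :=
  exists l : mor C -> nat,
    (forall f g, tgt f = src g -> l (comp f g) = l f + l g) /\
    (forall f, l f = 0 <-> is_id f).

Definition is_simple {C : Cat} (phi : Functor C C) (Delta : ob C -> mor C)
  (f : mor C) : Prop :=
  exists fs : mor C, src fs = tgt f /\ tgt fs = fob phi (src f) /\
    comp f fs = Delta (src f).

Definition prefix {C : Cat} (f g : mor C) : Prop :=
  exists z, tgt f = src z /\ g = comp f z.
Definition suffix {C : Cat} (f g : mor C) : Prop :=
  exists z, tgt z = src f /\ g = comp z f.

Definition is_lattice {T : Type} (S : T -> Prop) (le : T -> T -> Prop) : Prop :=
  forall a b, S a -> S b ->
    (exists j, S j /\ le a j /\ le b j /\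
       forall c, S c -> le a c -> le b c -> le j c) /\
    (exists m, S m /\ le m a /\ le m b /\
       forall c, S c -> le c a -> le c b -> le c m).

Definition garside_structure (C : Cat) (phi : Functor C C) (Delta : ob C -> mor C) : Prop :=
  is_automorphism phi /\ is_nat_trans_id phi Delta /\
  homogeneous C /\ cancellative C /\
  (forall f : mor C, is_atom f -> is_simple phi Delta f) /\
  (forall x : ob C,
     is_lattice (fun f : mor C => src f = x) prefix /\
     is_lattice (fun f : mor C => tgt f = x) suffix).

Definition garside_finite_type (C : Cat) : Prop :=
  exists (phi : Functor C C) (Delta : ob C -> mor C),
    garside_structure C phi Delta /\
    exists l : list (mor C), forall f, is_simple phi Delta f -> In f l.

Definition is_groupoid (C : Cat) : Prop :=
  forall f : mor C, exists g : mor C,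
    src g = tgt f /\ tgt g = src f /\
    comp f g = idm (src f) /\ comp g f = idm (tgt f).

Definition enveloping (C E : Cat) (iota : Functor C E) : Prop :=
  is_groupoid E /\
  forall (H : Cat) (F : Functor C H), is_groupoid H ->
    exists F' : Functor E H,
      ((forall o, fob F' (fob iota o) = fob F o) /\
       (forall f, fmor F' (fmor iota f) = fmor F f)) /\
      (forall F'' : Functor E H,
         (forall o, fob F'' (fob iota o) = fob F o) ->
         (forall f, fmor F'' (fmor iota f) = fmor F f) ->
         (forall o, fob F'' o = fob F' o) /\ (forall f, fmor F'' f = fmor F' f)).

(* isotropy group at x: morphisms x -> x, with product g*h := comp g h *)
Definition in_isotropy {E : Cat} (x : ob E) (g : mor E) : Prop :=
  src g = x /\ tgt g = x.

Definition simple_graph {V : Type} (adj : V -> V -> Prop) : Prop :=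
  (forall u v, adj u v -> adj v u) /\ (forall u, ~ adj u u).

Fixpoint dist_le {V : Type} (adj : V -> V -> Prop) (n : nat) (u v : V) : Prop :=
  match n with
  | 0 => u = v
  | S m => dist_le adj m u v \/ exists w, adj u w /\ dist_le adj m w v
  end.

Definition connected_graph {V : Type} (adj : V -> V -> Prop) : Prop :=
  inhabited V /\ forall u v, exists n, dist_le adj n u v.

Definition ball {V : Type} (adj : V -> V -> Prop) (c : V) (r : nat) (u : V) : Prop :=
  dist_le adj r c u.

Definition helly_graph {V : Type} (adj : V -> V -> Prop) : Prop :=
  simple_graph adj /\ connected_graph adj /\
  forall (I : Type) (c : I -> V) (r : I -> nat),
    (forall i j, exists u, ball adj (c i) (r i) u /\ ball adj (c j) (r j) u) ->
    exists u, forall i, ball adj (c i) (r i) u.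

Definition isotropy_action {E : Cat} (x : ob E) {V : Type}
  (adj : V -> V -> Prop) (act : mor E -> V -> V) : Prop :=
  (forall v, act (idm x) v = v) /\
  (forall g h v, in_isotropy x g -> in_isotropy x h ->
     act (comp g h) v = act g (act h v)) /\
  (forall g u v, in_isotropy x g -> (adj u v <-> adj (act g u) (act g v))).

Definition proper_action {E : Cat} (x : ob E) {V : Type}
  (adj : V -> V -> Prop) (act : mor E -> V -> V) : Prop :=
  forall (v : V) (r : nat), exists l : list (mor E),
    forall g, in_isotropy x g -> dist_le adj r v (act g v) -> In g l.

Definition cocompact_action {E : Cat} (x : ob E) {V : Type}
  (act : mor E -> V -> V) : Prop :=
  exists K : list V, forall v, exists k g, In k K /\ in_isotropy x g /\ v = act g k.

Definition acts_geometrically {E : Cat} (x : ob E) {V : Type}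
  (adj : V -> V -> Prop) (act : mor E -> V -> V) : Prop :=
  isotropy_action x adj act /\ proper_action x adj act /\ cocompact_action x act.

(* Every morphism of the enveloping groupoid is a fraction [a Delta^-n] with [a] in [C], and it
   has a unique reduced representative ([n = 0] or [a] not right-divisible by [Delta]); reduced
   fractions thus form a model of the enveloping groupoid, which the universal property
   identifies with the given one.  On the morphisms with a fixed source, the prefix order
   ([u <= u p] with [p] in [C]) is a lattice: any two elements lie above a common [Delta^-N],
   after which the lattice property of [C] applies.  Right multiplication by [Delta] is an order
   automorphism with [u <= u Delta].  Joining [u] and [w] when [u <= w Delta] and [w <= u Delta],
   the ball of radius [r] about [c] becomes the interval [[c Delta^-r, c Delta^r]], and
   pairwise intersecting intervals have a common point (a maximal element above one lower end
   and below all upper ends), which is the Helly property.  The isotropy group acts by left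
   multiplication, preserving the order; intervals are finite since [Delta^2r] has finitely many
   prefixes, and there is one orbit per target object, of which there are finitely many. *)

From Stdlib Require Import List Lia Arith.
From Stdlib Require Import Classical ClassicalEpsilon ProofIrrelevance.

Lemma exists_max_measure {T : Type} (P : T -> Prop) (m : T -> nat) (B : nat) (y0 : T) :
  (forall y, P y -> m y <= B) -> P y0 -> exists y, P y /\ forall y', P y' -> m y' <= m y.
Proof.
  intros HB. remember (B - m y0) as d eqn:Ed. revert y0 Ed.
  induction d as [d IH] using (well_founded_induction lt_wf). intros y0 Ed Hy0.
  destruct (classic (exists y, P y /\ m y0 < m y)) as [[y [Hy Hlt]]|Hno].
  - apply (IH (B - m y)) with y; auto. specialize (HB y Hy). lia.
  - exists y0. split; auto. intros y' Hy'.
    apply Nat.nlt_ge. intros Hlt. apply Hno. eauto.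
Qed.

(** * Groupoids and enveloping groupoids *)

Lemma comp_id' {K : Cat} (f : mor K) o : o = tgt f -> comp f (idm o) = f.
Proof. intros ->; apply comp_id. Qed.

Lemma id_comp' {K : Cat} (f : mor K) o : o = src f -> comp (idm o) f = f.
Proof. intros ->; apply id_comp. Qed.

Definition Fcomp {A B D : Cat} (F : Functor A B) (G : Functor B D) : Functor A D.
Proof.
  refine {| fob := fun o => fob G (fob F o); fmor := fun f => fmor G (fmor F f) |}.
  - intros f. now rewrite !fsrc.
  - intros f. now rewrite !ftgt.
  - intros o. now rewrite !fid.
  - intros f g H. rewrite fcomp by auto. apply fcomp. now rewrite ftgt, fsrc, H.
Defined.

Definition Fid (A : Cat) : Functor A A.
Proof. refine {| fob := fun o => o; fmor := fun f => f |}; auto. Defined.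

Section Groupoid.
Variable K : Cat.
Hypothesis HK : is_groupoid K.

Definition ginv (f : mor K) : mor K :=
  proj1_sig (constructive_indefinite_description _ (HK f)).

Lemma ginv_spec f : src (ginv f) = tgt f /\ tgt (ginv f) = src f /\
  comp f (ginv f) = idm (src f) /\ comp (ginv f) f = idm (tgt f).
Proof. exact (proj2_sig (constructive_indefinite_description _ (HK f))). Qed.

Lemma ginv_src f : src (ginv f) = tgt f. Proof. apply ginv_spec. Qed.
Lemma ginv_tgt f : tgt (ginv f) = src f. Proof. apply ginv_spec. Qed.
Lemma comp_ginv f : comp f (ginv f) = idm (src f). Proof. apply ginv_spec. Qed.
Lemma ginv_comp f : comp (ginv f) f = idm (tgt f). Proof. apply ginv_spec. Qed.

Lemma comp_cancel_l (h u w : mor K) : tgt h = src u -> tgt h = src w ->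
  comp h u = comp h w -> u = w.
Proof.
  intros Hu Hw E.
  rewrite <- (id_comp K u), <- (id_comp K w), <- Hu, <- Hw, <- ginv_comp.
  rewrite !comp_assoc by (rewrite ?ginv_tgt; auto). now rewrite E.
Qed.

Lemma comp_cancel_r (h u w : mor K) : tgt u = src h -> tgt w = src h ->
  comp u h = comp w h -> u = w.
Proof.
  intros Hu Hw E.
  rewrite <- (comp_id K u), <- (comp_id K w), Hu, Hw, <- comp_ginv.
  rewrite <- !comp_assoc by (rewrite ?ginv_src; auto). now rewrite E.
Qed.

Lemma compK (f g : mor K) : tgt f = src g -> comp (comp f g) (ginv g) = f.
Proof.
  intros H. rewrite comp_assoc by (rewrite ?ginv_src; auto).
  rewrite comp_ginv, <- H. apply comp_id.
Qed.

Lemma compKV (f g : mor K) : tgt f = tgt g -> comp (comp f (ginv g)) g = f.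
Proof.
  intros H. rewrite comp_assoc by (rewrite ?ginv_src, ?ginv_tgt; congruence).
  rewrite ginv_comp. apply comp_id'. auto.
Qed.

Lemma ginv_compK (g f : mor K) : tgt g = src f -> comp (ginv g) (comp g f) = f.
Proof.
  intros H. rewrite <- comp_assoc by (rewrite ?ginv_tgt; auto).
  rewrite ginv_comp, H. apply id_comp.
Qed.

Lemma ginv_unique (f g : mor K) : tgt f = src g -> comp f g = idm (src f) -> g = ginv f.
Proof.
  intros H E. apply (comp_cancel_l f); auto.
  - now rewrite ginv_src.
  - now rewrite E, comp_ginv.
Qed.

Lemma ginvM (f g : mor K) : tgt f = src g -> ginv (comp f g) = comp (ginv g) (ginv f).
Proof.
  intros H. symmetry. apply ginv_unique.
  - rewrite tgt_comp by auto. rewrite src_comp by (rewrite ginv_tgt, ginv_src; auto).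
    now rewrite ginv_src.
  - rewrite <- comp_assoc by (rewrite ?tgt_comp, ?ginv_src, ?ginv_tgt; auto).
    rewrite compK, comp_ginv, src_comp by auto. reflexivity.
Qed.

Lemma ginv_idm o : ginv (idm o) = idm o.
Proof.
  symmetry. apply ginv_unique; rewrite ?src_id, ?tgt_id; auto.
  apply comp_id'. now rewrite tgt_id.
Qed.

Lemma ginv_swap (f g h k : mor K) :
  tgt f = src g -> tgt h = src k -> src f = src h -> comp f g = comp h k ->
  comp (ginv h) f = comp k (ginv g).
Proof.
  intros Hfg Hhk Hfh E.
  assert (Hgk : tgt g = tgt k).
  { rewrite <- (tgt_comp K f g), <- (tgt_comp K h k), E by auto. reflexivity. }
  apply (comp_cancel_r g).
  - rewrite tgt_comp by (rewrite ginv_tgt; congruence). auto.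
  - rewrite tgt_comp by (rewrite ginv_src; congruence). apply ginv_tgt.
  - rewrite comp_assoc, E, ginv_compK, compKV by (rewrite ?ginv_tgt; congruence).
    reflexivity.
Qed.
End Groupoid.

Arguments ginv {K} HK f.

Lemma fmor_ginv (K1 K2 : Cat) (H1 : is_groupoid K1) (H2 : is_groupoid K2)
  (F : Functor K1 K2) f : fmor F (ginv H1 f) = ginv H2 (fmor F f).
Proof.
  apply ginv_unique.
  - rewrite ftgt, fsrc, ginv_src; auto.
  - rewrite <- fcomp by (rewrite ginv_src; auto). rewrite comp_ginv, fid, fsrc; auto.
Qed.

Lemma enveloping_iso (C E K : Cat) (iota : Functor C E) (HK : is_groupoid K)
  (J : Functor C K) (G : Functor K E) :
  enveloping C E iota ->
  (forall o, fob G (fob J o) = fob iota o) ->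
  (forall f, fmor G (fmor J f) = fmor iota f) ->
  (forall u, exists a b, tgt a = tgt b /\ u = comp (fmor J a) (ginv HK (fmor J b))) ->
  exists F : Functor E K, (forall o, fob G (fob F o) = o) /\
    (forall f, fmor G (fmor F f) = f) /\ (forall u, fmor F (fmor G u) = u).
Proof.
  intros [HE univ] GJ_ob GJ_mor J_gen.
  destruct (univ K J HK) as [F [[Fiota_ob Fiota_mor] _]].
  destruct (univ E iota HE) as [F0 [_ F0_unique]].
  destruct (F0_unique (Fcomp F G)) as [GF_ob GF_mor].
  { intros o. simpl. rewrite Fiota_ob. apply GJ_ob. }
  { intros f. simpl. rewrite Fiota_mor. apply GJ_mor. }
  destruct (F0_unique (Fid E) (fun _ => eq_refl) (fun _ => eq_refl)) as [id_ob id_mor].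
  exists F. split; [|split].
  - intros o. transitivity (fob F0 o); [apply GF_ob | symmetry; apply id_ob].
  - intros f. transitivity (fmor F0 f); [apply GF_mor | symmetry; apply id_mor].
  - intros u. destruct (J_gen u) as [a [b [Hab ->]]].
    assert (FGJ : forall f, fmor F (fmor G (fmor J f)) = fmor J f)
      by (intros f; rewrite GJ_mor; apply Fiota_mor).
    rewrite (fcomp _ _ G), (fcomp _ _ F) by (rewrite ?ftgt, ?fsrc, ?ginv_src, ?ftgt; congruence).
    rewrite (fmor_ginv _ _ HK HE G), (fmor_ginv _ _ HE HK F), !FGJ. reflexivity.
Qed.

Section TransferAction.
Variables E K : Cat.
Variables (F : Functor E K) (G : Functor K E).
Hypothesis GF_ob : forall o, fob G (fob F o) = o.
Hypothesis GF_mor : forall f, fmor G (fmor F f) = f.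
Hypothesis FG_mor : forall u, fmor F (fmor G u) = u.

Lemma in_isotropy_fmor x g : in_isotropy x g -> in_isotropy (fob F x) (fmor F g).
Proof. intros [Hs Ht]. split; rewrite ?fsrc, ?ftgt; congruence. Qed.

Lemma acts_geometrically_transfer x {V : Type} (adj : V -> V -> Prop) act :
  acts_geometrically (fob F x) adj act -> acts_geometrically x adj (fun g => act (fmor F g)).
Proof.
  intros [[act_id [act_comp act_adj]] [act_proper [K0 act_cocompact]]].
  split; [split; [|split]|split].
  - intros v. rewrite fid. apply act_id.
  - intros g h v Hg Hh. rewrite fcomp by (destruct Hg, Hh; congruence).
    apply act_comp; apply in_isotropy_fmor; auto.
  - intros g u v Hg. apply act_adj, in_isotropy_fmor; auto.
  - intros v r. destruct (act_proper v r) as [l Hl]. exists (map (fmor G) l).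
    intros g Hg Hd. rewrite <- (GF_mor g). apply in_map, Hl; auto. apply in_isotropy_fmor; auto.
  - exists K0. intros v. destruct (act_cocompact v) as [k [h [Hk [[Hs Ht] ->]]]].
    exists k, (fmor G h). rewrite FG_mor. repeat split; auto.
    + rewrite fsrc, Hs. apply GF_ob.
    + rewrite ftgt, Ht. apply GF_ob.
Qed.
End TransferAction.

Section Garside.
Variable C : Cat.
Variables phi psi : Functor C C.
Hypothesis psi_phi_ob : forall o, fob psi (fob phi o) = o.
Hypothesis phi_psi_ob : forall o, fob phi (fob psi o) = o.
Hypothesis phi_psi_mor : forall f, fmor phi (fmor psi f) = f.
Variable Delta : ob C -> mor C.
Hypothesis Delta_src : forall o, src (Delta o) = o.
Hypothesis Delta_tgt : forall o, tgt (Delta o) = fob phi o.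
Hypothesis Delta_nat : forall f, comp f (Delta (tgt f)) = comp (Delta (src f)) (fmor phi f).
Variable len : mor C -> nat.
Hypothesis len_comp : forall f g, tgt f = src g -> len (comp f g) = len f + len g.
Hypothesis len_eq0 : forall f, len f = 0 <-> is_id f.
Hypothesis C_cancellative : cancellative C.
Hypothesis atom_simple : forall f, is_atom f -> is_simple phi Delta f.
Hypothesis prefix_lattice : forall x, is_lattice (fun f : mor C => src f = x) prefix.
Variable simples : list (mor C).
Hypothesis simples_complete : forall f, is_simple phi Delta f -> In f simples.

(** * Iterates of [phi], powers of [Delta] and lengths *)

Definition phin_ob n o := Nat.iter n (fob phi) o.
Definition phin n f := Nat.iter n (fmor phi) f.
Definition psin_ob n o := Nat.iter n (fob psi) o.

Lemma phin_src n (f : mor C) : src (phin n f) = phin_ob n (src f).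
Proof. induction n; simpl; auto. rewrite fsrc. f_equal. exact IHn. Qed.
Lemma phin_tgt n (f : mor C) : tgt (phin n f) = phin_ob n (tgt f).
Proof. induction n; simpl; auto. rewrite ftgt. f_equal. exact IHn. Qed.

Lemma psin_phin_ob n o : psin_ob n (phin_ob n o) = o.
Proof.
  revert o; induction n; intros o; auto. unfold psin_ob, phin_ob in *.
  rewrite Nat.iter_succ_r, Nat.iter_succ, psi_phi_ob. apply IHn.
Qed.
Lemma phin_psin_ob n o : phin_ob n (psin_ob n o) = o.
Proof.
  revert o; induction n; intros o; auto. unfold psin_ob, phin_ob in *.
  rewrite Nat.iter_succ_r, Nat.iter_succ, phi_psi_ob. apply IHn.
Qed.

Lemma phin_ob_inj n a b : phin_ob n a = phin_ob n b -> a = b.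
Proof. intros E. rewrite <- (psin_phin_ob n a), <- (psin_phin_ob n b). congruence. Qed.
Lemma phin_add n m f : phin (n + m) f = phin n (phin m f).
Proof. apply Nat.iter_add. Qed.
Lemma phin_ob_S' n o : phin_ob (S n) o = phin_ob n (fob phi o).
Proof. apply Nat.iter_succ_r. Qed.
Lemma phin_S' n f : phin (S n) f = phin n (fmor phi f).
Proof. apply Nat.iter_succ_r. Qed.
Lemma phin_ob_comm n o : phin_ob n (fob phi o) = fob phi (phin_ob n o).
Proof. apply Nat.iter_swap. Qed.
Lemma psin_phin_ob_add n k o : psin_ob (n + k) (phin_ob k o) = psin_ob n o.
Proof. unfold psin_ob. rewrite Nat.iter_add. apply f_equal, psin_phin_ob. Qed.

Lemma phin_idm n o : phin n (idm o) = idm (phin_ob n o).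
Proof. induction n; auto. unfold phin, phin_ob in *; simpl. rewrite IHn, fid; auto. Qed.

Lemma phin_comp n (f g : mor C) : tgt f = src g -> phin n (comp f g) = comp (phin n f) (phin n g).
Proof.
  intros H; induction n; auto. unfold phin in *; simpl. rewrite IHn, fcomp; auto.
  fold (phin n f) (phin n g). rewrite phin_tgt, phin_src; congruence.
Qed.

Lemma cancel_r (f g b : mor C) : tgt f = src b -> tgt g = src b -> comp f b = comp g b -> f = g.
Proof.
  intros Hf Hg E.
  assert (Hs : src f = src g) by (rewrite <- (src_comp C f b), <- (src_comp C g b); congruence).
  apply (C_cancellative (idm (src f)) f g b); rewrite ?tgt_id; auto.
  rewrite !id_comp, Hs, id_comp. auto.
Qed.

Lemma cancel_l (a f g : mor C) : tgt a = src f -> tgt a = src g -> comp a f = comp a g -> f = g.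
Proof.
  intros Hf Hg E.
  assert (Ht : tgt f = tgt g) by (rewrite <- (tgt_comp C a f), <- (tgt_comp C a g); congruence).
  apply (C_cancellative a f g (idm (tgt f))); rewrite ?src_id; auto.
  rewrite !comp_id' by (rewrite ?tgt_comp; congruence). auto.
Qed.

Hint Rewrite src_id tgt_id Delta_src Delta_tgt phin_src phin_tgt fsrc ftgt
  psi_phi_ob phi_psi_ob psin_phin_ob phin_psin_ob psin_phin_ob_add phin_ob_comm : catdb.

Ltac endpoints := solve [ autorewrite with catdb in *; first [ congruence
   | rewrite src_comp by endpoints; endpoints | rewrite tgt_comp by endpoints; endpoints
   | match goal with
     | H : context [src (comp _ _)] |- _ => rewrite src_comp in H by endpoints; endpoints
     | H : context [tgt (comp _ _)] |- _ => rewrite tgt_comp in H by endpoints; endpoints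
     end ] ].

Fixpoint Dpow (n : nat) (o : ob C) : mor C :=
  match n with 0 => idm o | S n => comp (Delta o) (Dpow n (fob phi o)) end.

Lemma Dpow_src n o : src (Dpow n o) = o.
Proof.
  revert o; induction n; intros o; simpl. apply src_id.
  rewrite src_comp; auto. rewrite IHn; auto.
Qed.
Lemma Dpow_tgt n o : tgt (Dpow n o) = phin_ob n o.
Proof.
  revert o; induction n; intros o; simpl. apply tgt_id.
  rewrite tgt_comp by (rewrite Dpow_src; auto). rewrite IHn. symmetry. apply phin_ob_S'.
Qed.
Hint Rewrite Dpow_src Dpow_tgt : catdb.

Lemma phi_Delta o : fmor phi (Delta o) = Delta (fob phi o).
Proof.
  assert (H := Delta_nat (Delta o)). rewrite Delta_tgt, Delta_src in H.
  symmetry; apply (cancel_l (Delta o)); try endpoints; auto.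
Qed.

Lemma Dpow_nat n (f : mor C) : comp f (Dpow n (tgt f)) = comp (Dpow n (src f)) (phin n f).
Proof.
  revert f; induction n; intros f; simpl.
  - rewrite comp_id, id_comp. auto.
  - rewrite <- comp_assoc, Delta_nat, comp_assoc by endpoints.
    rewrite <- (ftgt C C phi f), IHn, (fsrc C C phi f).
    rewrite <- comp_assoc by endpoints. f_equal. symmetry. apply phin_S'.
Qed.

Lemma Dpow_add n m o : Dpow (n + m) o = comp (Dpow n o) (Dpow m (phin_ob n o)).
Proof.
  revert o; induction n; intros o; simpl.
  - rewrite id_comp' by endpoints. auto.
  - rewrite IHn, phin_ob_comm, comp_assoc by endpoints. reflexivity.
Qed.

Lemma Dpow_S_r n o : Dpow (S n) o = comp (Dpow n o) (Delta (phin_ob n o)).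
Proof. rewrite <- Nat.add_1_r, Dpow_add. simpl. rewrite comp_id' by endpoints. auto. Qed.

Lemma phin_Dpow k n o : phin k (Dpow n o) = Dpow n (phin_ob k o).
Proof.
  revert o; induction n; intros o; simpl.
  - apply phin_idm.
  - rewrite phin_comp, IHn by endpoints. f_equal.
    + clear IHn. induction k; auto. unfold phin, phin_ob in *; simpl. rewrite IHk, phi_Delta; auto.
    + f_equal. apply phin_ob_comm.
Qed.

Definition mulDpow (a : mor C) k := comp a (Dpow k (tgt a)).

Lemma mulDpow_src (a : mor C) k : src (mulDpow a k) = src a.
Proof. unfold mulDpow; endpoints. Qed.
Lemma mulDpow_tgt (a : mor C) k : tgt (mulDpow a k) = phin_ob k (tgt a).
Proof. unfold mulDpow; endpoints. Qed.
Hint Rewrite mulDpow_src mulDpow_tgt : catdb.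

Lemma mulDpow0 (a : mor C) : mulDpow a 0 = a.
Proof. apply comp_id. Qed.

Lemma mulDpow1 (f : mor C) : mulDpow f 1 = comp f (Delta (tgt f)).
Proof. unfold mulDpow. simpl. rewrite comp_id' by endpoints. auto. Qed.

Lemma mulDpowD (a : mor C) k k' : mulDpow (mulDpow a k) k' = mulDpow a (k + k').
Proof.
  unfold mulDpow at 1. rewrite mulDpow_tgt. unfold mulDpow.
  rewrite comp_assoc, Dpow_add by endpoints. auto.
Qed.

Lemma mulDpow_inj (f g : mor C) j : tgt f = tgt g -> mulDpow f j = mulDpow g j -> f = g.
Proof. unfold mulDpow. intros H E. rewrite H in E. apply cancel_r in E; endpoints. Qed.

Lemma is_id_idm (q : mor C) : is_id q -> q = idm (src q).
Proof. intros [o ->]. rewrite src_id. auto. Qed.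

Lemma len_idm o : len (idm o) = 0.
Proof. apply len_eq0. exists o; auto. Qed.

Lemma len_pos (q : mor C) : ~ is_id q -> 0 < len q.
Proof. intros H. destruct (len q) eqn:E; [|lia]. exfalso. apply H, len_eq0; auto. Qed.

Lemma prefix_refl (f : mor C) : prefix f f.
Proof. exists (idm (tgt f)). rewrite src_id, comp_id. auto. Qed.

Lemma prefix_comp (f z : mor C) : tgt f = src z -> prefix f (comp f z).
Proof. intros H. exists z. auto. Qed.

Lemma prefix_trans (f g h : mor C) : prefix f g -> prefix g h -> prefix f h.
Proof.
  intros [z [Hz ->]] [w [Hw ->]]. exists (comp z w).
  split; [endpoints|]. rewrite comp_assoc; endpoints.
Qed.

Lemma prefix_len (f g : mor C) : prefix f g -> len f <= len g.
Proof. intros [z [H ->]]. rewrite len_comp; auto. lia. Qed.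

Lemma last_atom (q : mor C) : ~ is_id q ->
  exists f a, is_atom a /\ tgt f = src a /\ q = comp f a /\ len f < len q.
Proof.
  remember (len q) as n eqn:En. revert q En.
  induction n as [n IH] using (well_founded_induction lt_wf).
  intros q En Hq.
  destruct (classic (is_atom q)) as [Ha|Ha].
  - exists (idm (src q)), q. rewrite tgt_id, id_comp, len_idm.
    pose proof (len_pos q Hq). split; [exact Ha|]. repeat split. lia.
  - assert (exists g h, tgt g = src h /\ ~ is_id g /\ ~ is_id h /\ q = comp g h)
      as [g [h [Hgh [Hg [Hh ->]]]]] by (apply NNPP; intros Hn; apply Ha; split; auto).
    pose proof (len_pos g Hg). rewrite len_comp in En by auto.
    destruct (IH (len h) ltac:(lia) h eq_refl Hh) as [f [a [Ha' [Hfa [-> Hlen]]]]].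
    exists (comp g f), a. split; [exact Ha'|]. split; [|split].
    + endpoints.
    + rewrite comp_assoc; endpoints.
    + rewrite len_comp by endpoints. lia.
Qed.

Lemma prefix_Dpow n (q : mor C) : len q <= n -> prefix q (Dpow n (src q)).
Proof.
  revert q; induction n as [|n IH]; intros q Hq.
  - assert (is_id q) by (apply len_eq0; lia). rewrite (is_id_idm q) at 1 by auto.
    apply prefix_refl.
  - destruct (classic (is_id q)) as [Hi|Hi].
    + rewrite (is_id_idm q) at 1 by auto. exists (Dpow (S n) (src q)).
      split; [endpoints|]. symmetry. apply id_comp'. endpoints.
    + destruct (last_atom q Hi) as [f [a [Ha [Hfa [-> Hlen]]]]].
      destruct (IH f ltac:(lia)) as [w [Hw Ew]].
      destruct (atom_simple a Ha) as [a' [Ha'1 [Ha'2 Ea]]].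
      assert (Htw : tgt w = phin_ob n (src f)) by (rewrite <- (Dpow_tgt n (src f)), Ew; endpoints).
      exists (comp a' (fmor phi w)). split; [endpoints|].
      rewrite src_comp, Dpow_S_r, Ew, <- Htw by endpoints.
      rewrite comp_assoc, Delta_nat, <- Hw, Hfa, <- Ea by endpoints.
      rewrite !comp_assoc; endpoints.
Qed.

Lemma idm_simple o : is_simple phi Delta (idm o).
Proof. exists (Delta o). rewrite Delta_src, tgt_id, src_id, Delta_tgt, id_comp'; auto. Qed.

Fixpoint short_morphisms (L : nat) : list (mor C) :=
  match L with
  | 0 => simples
  | S L => short_morphisms L ++
           flat_map (fun f => map (fun a => comp f a) simples) (short_morphisms L)
  end.

Lemma in_short_morphisms L (q : mor C) : len q <= L -> In q (short_morphisms L).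
Proof.
  revert q; induction L; intros q Hq; simpl.
  - apply simples_complete. assert (is_id q) by (apply len_eq0; lia).
    rewrite (is_id_idm q) by auto. apply idm_simple.
  - apply in_or_app. destruct (Nat.le_gt_cases (len q) L) as [H|H]; [left; auto|right].
    assert (Hi : ~ is_id q) by (intros Hi; apply len_eq0 in Hi; lia).
    destruct (last_atom q Hi) as [f [a [Ha [Hfa [-> Hlen]]]]].
    apply in_flat_map. exists f. split; [apply IHL; lia|].
    apply in_map_iff. exists a. split; auto.
Qed.

(** * The groupoid of fractions *)

(* [(a, n)] stands for [a Delta^-n]. *)
Definition frac : Type := (mor C * nat)%type.
Definition frac_tgt (x : frac) : ob C := psin_ob (snd x) (tgt (fst x)).
Definition Delta_rdiv (a : mor C) : Prop :=
  exists b, tgt b = fob psi (tgt a) /\ a = comp b (Delta (fob psi (tgt a))).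
Definition reduced (x : frac) : Prop := snd x = 0 \/ ~ Delta_rdiv (fst x).
Definition frac_equiv (x y : frac) : Prop :=
  exists k j, snd x + k = snd y + j /\ mulDpow (fst x) k = mulDpow (fst y) j.

Lemma frac_equiv_refl x : frac_equiv x x.
Proof. exists 0, 0. auto. Qed.

Lemma frac_equiv_sym x y : frac_equiv x y -> frac_equiv y x.
Proof. intros [k [j [H1 H2]]]. exists j, k. auto. Qed.

Lemma frac_equiv_trans x y z : frac_equiv x y -> frac_equiv y z -> frac_equiv x z.
Proof.
  intros [k [j [H1 H2]]] [k' [j' [H1' H2']]]. exists (k + k'), (j' + j). split; [lia|].
  rewrite <- mulDpowD, H2, mulDpowD, (Nat.add_comm j k'), <- mulDpowD, H2', mulDpowD.
  reflexivity.
Qed.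

Lemma frac_equiv_src x y : frac_equiv x y -> src (fst x) = src (fst y).
Proof. intros [k [j [_ H]]]. rewrite <- (mulDpow_src (fst x) k), H. apply mulDpow_src. Qed.

Lemma frac_equiv_tgt x y : frac_equiv x y -> frac_tgt x = frac_tgt y.
Proof.
  intros [k [j [H1 H2]]]. unfold frac_tgt.
  rewrite <- (psin_phin_ob_add (snd x) k), <- (psin_phin_ob_add (snd y) j).
  rewrite <- !mulDpow_tgt, H2, H1. reflexivity.
Qed.

Lemma reduced_exists x : exists y, frac_equiv x y /\ reduced y.
Proof.
  destruct x as [a n]. revert a; induction n; intros a.
  - exists (a, 0). split; [apply frac_equiv_refl | left; auto].
  - destruct (classic (Delta_rdiv a)) as [[b [Hb Ha]]|Hn].
    + destruct (IHn b) as [y [Y1 Y2]]. exists y. split; auto.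
      apply frac_equiv_trans with (b, n); auto. exists 0, 1. simpl. split; [lia|].
      rewrite mulDpow0, mulDpow1, Hb. auto.
    + exists (a, S n). split; [apply frac_equiv_refl | right; auto].
Qed.

(* [b = a Delta^(m-n)], so [m > n] would make [b] right-divisible by [Delta]. *)
Lemma reduced_unique_le a n b m : n <= m -> frac_equiv (a, n) (b, m) ->
  reduced (a, n) -> reduced (b, m) -> (a, n) = (b, m).
Proof.
  intros Hnm [k [j [H1 H2]]] _ R2. simpl in *.
  replace k with ((m - n) + j) in H2 by lia. rewrite <- mulDpowD in H2.
  assert (Ht : tgt (mulDpow a (m - n)) = tgt b).
  { apply (phin_ob_inj j). rewrite <- !mulDpow_tgt. congruence. }
  apply mulDpow_inj in H2; auto.
  destruct (m - n) as [|d] eqn:Ed.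
  - rewrite mulDpow0 in H2. subst. f_equal. lia.
  - exfalso. destruct R2 as [R2|R2]; [simpl in R2; lia|]. apply R2. simpl.
    subst b. rewrite <- (Nat.add_1_r d), <- mulDpowD, mulDpow1. exists (mulDpow a d).
    rewrite tgt_comp by endpoints. rewrite Delta_tgt, psi_phi_ob. auto.
Qed.

Lemma reduced_unique x y : frac_equiv x y -> reduced x -> reduced y -> x = y.
Proof.
  destruct x as [a n], y as [b m]. intros Hxy Rx Ry.
  destruct (Nat.le_gt_cases n m).
  - apply reduced_unique_le; auto.
  - symmetry. apply reduced_unique_le; auto. lia. apply frac_equiv_sym; auto.
Qed.

Definition reduce (x : frac) : frac :=
  proj1_sig (constructive_indefinite_description _ (reduced_exists x)).

Lemma reduce_equiv x : frac_equiv x (reduce x).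
Proof. exact (proj1 (proj2_sig (constructive_indefinite_description _ (reduced_exists x)))). Qed.

Lemma reduce_reduced x : reduced (reduce x).
Proof. exact (proj2 (proj2_sig (constructive_indefinite_description _ (reduced_exists x)))). Qed.

Lemma reduce_eq x y : frac_equiv x y -> reduce x = reduce y.
Proof.
  intros H. apply reduced_unique; try apply reduce_reduced.
  apply frac_equiv_trans with x; [apply frac_equiv_sym, reduce_equiv|].
  apply frac_equiv_trans with y; auto. apply reduce_equiv.
Qed.

Lemma reduce_id x : reduced x -> reduce x = x.
Proof.
  intros H. apply reduced_unique; auto.
  - apply frac_equiv_sym, reduce_equiv.
  - apply reduce_reduced.
Qed.

Lemma reduce_src x : src (fst (reduce x)) = src (fst x).
Proof. symmetry. apply frac_equiv_src, reduce_equiv. Qed.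

Lemma reduce_tgt x : frac_tgt (reduce x) = frac_tgt x.
Proof. symmetry. apply frac_equiv_tgt, reduce_equiv. Qed.

(* [a Delta^-n . b Delta^-m = a phi^n(b) Delta^-(n+m)] *)
Definition frac_mul (x y : frac) : frac :=
  (comp (fst x) (phin (snd x) (fst y)), snd x + snd y).
Definition composable (x y : frac) : Prop := frac_tgt x = src (fst y).

Lemma composable_tgt x y : composable x y -> tgt (fst x) = src (phin (snd x) (fst y)).
Proof. unfold composable, frac_tgt. intros H. rewrite phin_src, <- H, phin_psin_ob. auto. Qed.

Lemma frac_mul_src x y : composable x y -> src (fst (frac_mul x y)) = src (fst x).
Proof. intros H. apply composable_tgt in H. simpl. endpoints. Qed.

Lemma frac_mul_tgt x y : composable x y -> frac_tgt (frac_mul x y) = frac_tgt y.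
Proof.
  intros H. apply composable_tgt in H. unfold frac_tgt; simpl.
  rewrite tgt_comp by auto. rewrite phin_tgt, Nat.add_comm, psin_phin_ob_add. auto.
Qed.

Lemma mulDpow_comp_phin_l (a c : mor C) n k : tgt a = src (phin n c) ->
  mulDpow (comp a (phin n c)) k = comp (mulDpow a k) (phin (k + n) c).
Proof.
  intros H. unfold mulDpow. rewrite tgt_comp by auto.
  rewrite comp_assoc, Dpow_nat, <- H by endpoints.
  rewrite <- comp_assoc, phin_add by endpoints. auto.
Qed.

Lemma mulDpow_comp_phin_r (a b : mor C) n k : tgt a = src (phin n b) ->
  mulDpow (comp a (phin n b)) k = comp a (phin n (mulDpow b k)).
Proof.
  intros H. unfold mulDpow. rewrite tgt_comp by auto.
  rewrite comp_assoc, phin_comp, phin_Dpow, phin_tgt by endpoints. auto.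
Qed.

Lemma frac_mul_equiv_l x y z : composable x z -> frac_equiv x y ->
  frac_equiv (frac_mul x z) (frac_mul y z).
Proof.
  intros Hxz Hxy.
  assert (Hyz : composable y z) by (unfold composable; rewrite <- (frac_equiv_tgt x y Hxy); auto).
  apply composable_tgt in Hxz. apply composable_tgt in Hyz.
  destruct Hxy as [k [j [H1 H2]]]. exists k, j.
  destruct x as [a n], y as [b m], z as [c p]; simpl in *. split; [lia|].
  rewrite !mulDpow_comp_phin_l, H2 by auto. replace (k + n) with (j + m) by lia. auto.
Qed.

Lemma frac_mul_equiv_r x y z : composable x y -> frac_equiv y z ->
  frac_equiv (frac_mul x y) (frac_mul x z).
Proof.
  intros Hxy Hyz.
  assert (Hxz : composable x z) by (unfold composable; rewrite Hxy; apply frac_equiv_src; auto).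
  apply composable_tgt in Hxy. apply composable_tgt in Hxz.
  destruct Hyz as [k [j [H1 H2]]]. exists k, j.
  destruct x as [a n], y as [b m], z as [c p]; simpl in *. split; [lia|].
  rewrite !mulDpow_comp_phin_r, H2 by auto. auto.
Qed.

Lemma frac_mul_assoc x y z : composable x y -> composable y z ->
  frac_mul (frac_mul x y) z = frac_mul x (frac_mul y z).
Proof.
  intros Hxy Hyz. apply composable_tgt in Hxy. apply composable_tgt in Hyz.
  destruct x as [a n], y as [b m], z as [c p]; unfold frac_mul; simpl in *. f_equal; [|lia].
  rewrite phin_comp, phin_add by auto. rewrite comp_assoc; endpoints.
Qed.

Definition rfrac : Type := {x : frac | reduced x}.

Definition rfrac_of (a : mor C) : rfrac := exist _ (a, 0) (or_introl eq_refl).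

Lemma rfrac_eq (u w : rfrac) : proj1_sig u = proj1_sig w -> u = w.
Proof.
  destruct u as [x p], w as [y q]; simpl. intros ->. f_equal. apply proof_irrelevance.
Qed.

Definition Frac : Cat.
Proof.
  refine {| ob := ob C; mor := rfrac;
            src := fun u => src (fst (proj1_sig u)); tgt := fun u => frac_tgt (proj1_sig u);
            idm := fun o => rfrac_of (idm o);
            comp := fun u w => exist _ (reduce (frac_mul (proj1_sig u) (proj1_sig w)))
                                      (reduce_reduced _) |}.
  - intros o. apply src_id.
  - intros o. apply tgt_id.
  - intros u w H. simpl. rewrite reduce_src, frac_mul_src; auto.
  - intros u w H. simpl. rewrite reduce_tgt, frac_mul_tgt; auto.
  - intros [[a n] R]. apply rfrac_eq; simpl.
    unfold frac_mul; simpl. rewrite id_comp. apply reduce_id; auto.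
  - intros [[a n] R]. apply rfrac_eq; unfold frac_tgt; simpl.
    unfold frac_mul; simpl. rewrite phin_idm, phin_psin_ob, comp_id, Nat.add_0_r.
    apply reduce_id; auto.
  - intros [x Rx] [y Ry] [z Rz] H1 H2. apply rfrac_eq; simpl in *.
    apply reduce_eq. apply frac_equiv_trans with (frac_mul (frac_mul x y) z).
    + apply frac_mul_equiv_l; [|apply frac_equiv_sym, reduce_equiv].
      unfold composable. rewrite reduce_tgt, frac_mul_tgt; auto.
    + rewrite frac_mul_assoc by auto. apply frac_mul_equiv_r; [|apply reduce_equiv].
      unfold composable. rewrite frac_mul_src; auto.
Defined.

Section FracInverse.
Variables (a c : mor C) (k : nat).
Hypothesis Hac : tgt a = src c.
Hypothesis Ec : Dpow k (src a) = comp a c.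

Lemma Dpow_complement_swap : comp c (phin k a) = Dpow k (tgt a).
Proof.
  assert (Htc : tgt c = phin_ob k (src a)) by (rewrite <- (Dpow_tgt k (src a)), Ec; endpoints).
  apply (cancel_l a); try endpoints.
  rewrite <- comp_assoc by endpoints. rewrite <- Ec. symmetry. apply Dpow_nat.
Qed.

Lemma frac_right_inverse n :
  comp a (phin n (comp (Dpow n (psin_ob n (tgt a))) c)) = Dpow (n + k) (src a).
Proof.
  rewrite phin_comp by endpoints. rewrite phin_Dpow, phin_psin_ob.
  rewrite <- comp_assoc by endpoints. rewrite Dpow_nat.
  rewrite comp_assoc by endpoints. rewrite <- phin_comp by endpoints.
  rewrite <- Ec, phin_Dpow, Dpow_add. auto.
Qed.

Lemma frac_left_inverse n :
  comp (comp (Dpow n (psin_ob n (tgt a))) c) (phin k a) = Dpow (n + k) (psin_ob n (tgt a)).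
Proof.
  assert (Htc : tgt c = phin_ob k (src a)) by (rewrite <- (Dpow_tgt k (src a)), Ec; endpoints).
  rewrite comp_assoc by endpoints. rewrite Dpow_complement_swap, Dpow_add, phin_psin_ob. auto.
Qed.
End FracInverse.

(* If [a c = Delta^k], the inverse of [a Delta^-n] is [Delta^n c Delta^-k]. *)
Lemma Frac_groupoid : is_groupoid Frac.
Proof.
  intros [[a n] R].
  destruct (prefix_Dpow (len a) a (le_n _)) as [c [Hc Ec]].
  set (k := len a) in *.
  set (o := psin_ob n (tgt a)).
  assert (Htc : tgt c = phin_ob k (src a)) by (rewrite <- (Dpow_tgt k (src a)), Ec; endpoints).
  set (y := (comp (Dpow n o) c, k)).
  assert (Hsy : src (comp (Dpow n o) c) = o) by (unfold o; endpoints).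
  assert (Cxy : composable (a, n) y) by (unfold composable, frac_tgt; simpl; rewrite Hsy; auto).
  assert (Cyx : composable y (a, n)).
  { unfold composable, frac_tgt, y; simpl. rewrite tgt_comp by (unfold o; endpoints).
    rewrite Htc, psin_phin_ob. auto. }
  exists (exist _ (reduce y) (reduce_reduced y)). simpl.
  rewrite reduce_src, reduce_tgt. split; [exact Hsy|]. split; [exact Cyx|]. split.
  - apply rfrac_eq; simpl. transitivity (reduce (frac_mul (a, n) y)).
    + apply reduce_eq, frac_mul_equiv_r; [|apply frac_equiv_sym, reduce_equiv].
      unfold composable. rewrite reduce_src. apply Cxy.
    + rewrite <- (reduce_id (idm (src a), 0)) by (left; auto). apply reduce_eq.
      exists 0, (n + k). simpl. split; [lia|]. rewrite mulDpow0. unfold mulDpow.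
      rewrite tgt_id, id_comp' by endpoints. apply frac_right_inverse; auto.
  - apply rfrac_eq; simpl. transitivity (reduce (frac_mul y (a, n))).
    + apply reduce_eq, frac_mul_equiv_l; [|apply frac_equiv_sym, reduce_equiv].
      unfold composable. rewrite reduce_tgt. apply Cyx.
    + rewrite <- (reduce_id (idm (frac_tgt (a, n)), 0)) by (left; auto). apply reduce_eq.
      exists 0, (k + n). simpl. split; [lia|]. rewrite mulDpow0. unfold mulDpow.
      rewrite tgt_id, id_comp' by endpoints.
      unfold frac_tgt; simpl. rewrite Nat.add_comm. apply frac_left_inverse; auto.
Qed.

Definition incl : Functor C Frac.
Proof.
  refine (@Build_Functor C Frac (fun o => o) rfrac_of _ _ _ _); try reflexivity.
  intros f g H. apply rfrac_eq. simpl. symmetry.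
  exact (reduce_id (comp f g, 0) (or_introl eq_refl)).
Defined.

Lemma incl_inj (p q : mor C) : fmor incl p = fmor incl q -> p = q.
Proof. intros H. exact (f_equal (fun u : rfrac => fst (proj1_sig u)) H). Qed.

Lemma incl_comp (p q : mor C) : tgt p = src q ->
  fmor incl (comp p q) = comp (fmor incl p) (fmor incl q).
Proof. apply fcomp. Qed.

Lemma rfrac_decomp (a : mor C) n (R : reduced (a, n)) :
  comp (exist _ (a, n) R : mor Frac) (fmor incl (Dpow n (psin_ob n (tgt a)))) = fmor incl a.
Proof.
  apply rfrac_eq. simpl. unfold frac_mul; simpl. rewrite phin_Dpow, phin_psin_ob, Nat.add_0_r.
  rewrite <- (reduce_id (a, 0)) by (left; auto). apply reduce_eq.
  exists 0, n. simpl. split; [lia|]. rewrite mulDpow0. auto.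
Qed.

Section Evaluation.
Variable Env : Cat.
Variable iota : Functor C Env.
Hypothesis HEnv : is_groupoid Env.
Hint Rewrite ginv_src ginv_tgt : catdb.

Definition frac_eval (x : frac) : mor Env :=
  comp (fmor iota (fst x)) (ginv HEnv (fmor iota (Dpow (snd x) (frac_tgt x)))).

Lemma frac_eval_mulDpow (a : mor C) n k : frac_eval (mulDpow a k, n + k) = frac_eval (a, n).
Proof.
  unfold frac_eval, frac_tgt; simpl. rewrite mulDpow_tgt, psin_phin_ob_add.
  rewrite Dpow_add, phin_psin_ob. unfold mulDpow.
  rewrite fcomp by endpoints. rewrite (fcomp _ _ iota (Dpow n (psin_ob n (tgt a)))) by endpoints.
  rewrite ginvM by endpoints. rewrite <- comp_assoc by endpoints.
  rewrite compK by endpoints. reflexivity.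
Qed.

Lemma frac_eval_equiv x y : frac_equiv x y -> frac_eval x = frac_eval y.
Proof.
  destruct x as [a n], y as [b m]; intros [k [j [H1 H2]]]. simpl in *.
  rewrite <- (frac_eval_mulDpow a n k), <- (frac_eval_mulDpow b m j), H1, H2. auto.
Qed.

Lemma frac_eval_mul x y : composable x y ->
  frac_eval (frac_mul x y) = comp (frac_eval x) (frac_eval y).
Proof.
  intros H. assert (Hc := composable_tgt x y H).
  destruct x as [a n], y as [b m]. unfold composable, frac_tgt in H; simpl in H, Hc.
  unfold frac_eval, frac_mul, frac_tgt; simpl.
  rewrite tgt_comp by auto.
  rewrite phin_tgt, (Nat.add_comm n m), psin_phin_ob_add, Dpow_add, phin_psin_ob.
  rewrite H.
  assert (Swap : comp (ginv HEnv (fmor iota (Dpow n (src b)))) (fmor iota b) =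
                 comp (fmor iota (phin n b)) (ginv HEnv (fmor iota (Dpow n (tgt b))))).
  { apply ginv_swap; try endpoints. rewrite <- !fcomp by endpoints. f_equal. apply Dpow_nat. }
  rewrite fcomp, (fcomp _ _ iota (Dpow m _)), ginvM by endpoints.
  rewrite !comp_assoc by endpoints.
  rewrite <- (comp_assoc Env (ginv HEnv (fmor iota (Dpow n (src b))))), Swap by endpoints.
  rewrite comp_assoc by endpoints. reflexivity.
Qed.

Definition eval : Functor Frac Env.
Proof.
  refine (@Build_Functor Frac Env (fob iota) (fun u : rfrac => frac_eval (proj1_sig u)) _ _ _ _).
  - intros [[a n] R]. unfold frac_eval, frac_tgt; simpl. rewrite src_comp by endpoints. apply fsrc.
  - intros [[a n] R]. unfold frac_eval; simpl; unfold frac_tgt; simpl.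
    rewrite tgt_comp by endpoints.
    rewrite ginv_tgt, fsrc, Dpow_src. reflexivity.
  - intros o. unfold frac_eval, frac_tgt; simpl. rewrite tgt_id, !fid, ginv_idm.
    apply comp_id'. endpoints.
  - intros [x Rx] [y Ry] H. simpl in *.
    rewrite <- (frac_eval_equiv _ _ (reduce_equiv _)). apply frac_eval_mul. auto.
Defined.

Lemma eval_incl (p : mor C) : fmor eval (fmor incl p) = fmor iota p.
Proof.
  simpl. unfold frac_eval, frac_tgt; simpl. rewrite fid, ginv_idm. apply comp_id'. endpoints.
Qed.
End Evaluation.

Lemma Frac_generated u : exists a b, tgt a = tgt b /\
  u = comp (fmor incl a) (ginv Frac_groupoid (fmor incl b)).
Proof.
  destruct u as [[a n] R]. exists a, (Dpow n (psin_ob n (tgt a))). split; [endpoints|].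
  apply (comp_cancel_r Frac Frac_groupoid (fmor incl (Dpow n (psin_ob n (tgt a))))).
  - simpl; unfold frac_tgt; simpl. endpoints.
  - rewrite (tgt_comp Frac) by (rewrite ginv_src; simpl; unfold frac_tgt; simpl; endpoints).
    rewrite ginv_tgt. simpl. endpoints.
  - rewrite compKV by (simpl; unfold frac_tgt; simpl; endpoints). apply rfrac_decomp.
Qed.

(** * The prefix order on fractions *)

Lemma incl_ob o : fob incl o = o. Proof. reflexivity. Qed.
Hint Rewrite incl_ob (ginv_src Frac Frac_groupoid) (ginv_tgt Frac Frac_groupoid) : catdb.

Definition fprefix (u w : mor Frac) : Prop :=
  exists p : mor C, src p = tgt u /\ w = comp u (fmor incl p).

Lemma fprefix_refl u : fprefix u u.
Proof. exists (@idm C (tgt u)). split; [apply src_id|]. rewrite fid. symmetry. apply comp_id. Qed.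

Lemma fprefix_src u w : fprefix u w -> src w = src u.
Proof. intros [p [H ->]]. endpoints. Qed.

Lemma fprefix_trans u v w : fprefix u v -> fprefix v w -> fprefix u w.
Proof.
  intros [p [Hp ->]] [q [Hq ->]]. exists (comp p q). split; [endpoints|].
  rewrite incl_comp by endpoints. rewrite comp_assoc; endpoints.
Qed.

Lemma comp_incl_inj (u : mor Frac) (p q : mor C) : src p = tgt u -> src q = tgt u ->
  comp u (fmor incl p) = comp u (fmor incl q) -> p = q.
Proof. intros Hp Hq E. apply incl_inj. apply (comp_cancel_l _ Frac_groupoid u); auto. Qed.

Lemma fprefix_antisym u w : fprefix u w -> fprefix w u -> u = w.
Proof.
  intros [p [Hp Ew]] [q [Hq Eu]].
  assert (Hpq : tgt p = src q) by (rewrite Hq, Ew; endpoints).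
  assert (Epq : comp p q = @idm C (tgt u)).
  { apply (comp_incl_inj u); [endpoints | endpoints|].
    rewrite incl_comp, <- comp_assoc, <- Ew, <- Eu by endpoints.
    rewrite fid. symmetry. apply comp_id. }
  assert (Lp : len p = 0) by (assert (L := len_comp p q Hpq); rewrite Epq, len_idm in L; lia).
  apply len_eq0, is_id_idm in Lp. rewrite Ew, Lp, fid, Hp. symmetry. apply comp_id.
Qed.

Lemma fprefix_comp_l h u w : tgt h = src u -> tgt h = src w ->
  fprefix (comp h u) (comp h w) <-> fprefix u w.
Proof.
  intros Hu Hw. split.
  - intros [p [Hp E]]. exists p. split; [endpoints|].
    rewrite comp_assoc in E by endpoints. apply (comp_cancel_l _ Frac_groupoid) in E; endpoints.
  - intros [p [Hp ->]]. exists p. split; [endpoints|]. rewrite comp_assoc; endpoints.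
Qed.

Lemma fprefix_incl (p q : mor C) : prefix p q -> fprefix (fmor incl p) (fmor incl q).
Proof. intros [z [H ->]]. exists z. split; [endpoints|]. apply incl_comp; auto. Qed.

Definition mulD (u : mor Frac) : mor Frac := comp u (fmor incl (Delta (tgt u))).

Lemma mulD_src u : src (mulD u) = src u.
Proof. apply (src_comp Frac). symmetry. apply Delta_src. Qed.
Lemma mulD_tgt u : tgt (mulD u) = fob phi (tgt u).
Proof. unfold mulD. rewrite (tgt_comp Frac) by (symmetry; apply Delta_src). apply Delta_tgt. Qed.
Hint Rewrite mulD_src mulD_tgt : catdb.

Lemma fprefix_mulD u : fprefix u (mulD u).
Proof. exists (Delta (tgt u)). auto. Qed.

Lemma mulD_comp_l h u : tgt h = src u -> mulD (comp h u) = comp h (mulD u).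
Proof. intros H. unfold mulD. rewrite tgt_comp by auto. rewrite comp_assoc; endpoints. Qed.

(* [u p Delta = u Delta phi(p)], and [phi] is invertible. *)
Lemma mulD_fprefix u w : fprefix (mulD u) (mulD w) <-> fprefix u w.
Proof.
  split.
  - intros [p [Hp Ew]]. set (q := fmor psi p).
    assert (Hq : fmor phi q = p) by apply phi_psi_mor.
    assert (Sq : src q = tgt u) by (unfold q; rewrite fsrc, Hp, mulD_tgt; auto).
    exists q. split; auto.
    assert (Eq : comp (comp u (fmor incl q)) (fmor incl (Delta (tgt q))) = mulD w).
    { rewrite Ew. unfold mulD. rewrite comp_assoc, <- incl_comp by endpoints.
      rewrite Delta_nat, Hq, Sq, incl_comp by endpoints. rewrite comp_assoc; endpoints. }
    assert (Tq : tgt q = tgt w).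
    { apply (f_equal tgt) in Eq. rewrite mulD_tgt, tgt_comp in Eq by endpoints.
      change (tgt (Delta (tgt q)) = fob phi (tgt w)) in Eq. rewrite Delta_tgt in Eq.
      rewrite <- (psi_phi_ob (tgt q)), Eq, psi_phi_ob. auto. }
    unfold mulD in Eq. rewrite Tq in Eq. symmetry.
    apply (comp_cancel_r _ Frac_groupoid) in Eq; endpoints.
  - intros [p [Hp ->]]. exists (fmor phi p). split; [endpoints|].
    unfold mulD. rewrite comp_assoc, <- incl_comp by endpoints.
    rewrite tgt_comp by endpoints. simpl fob. rewrite ftgt. simpl fob.
    rewrite Delta_nat, Hp, incl_comp by endpoints. rewrite comp_assoc; endpoints.
Qed.

Definition divD (u : mor Frac) : mor Frac :=
  comp u (ginv Frac_groupoid (fmor incl (Delta (fob psi (tgt u))))).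

Lemma divD_src u : src (divD u) = src u. Proof. unfold divD. endpoints. Qed.
Lemma divD_tgt u : tgt (divD u) = fob psi (tgt u). Proof. unfold divD. endpoints. Qed.
Hint Rewrite divD_src divD_tgt : catdb.

Lemma mulD_divD u : mulD (divD u) = u.
Proof.
  unfold mulD. rewrite divD_tgt. unfold divD.
  rewrite comp_assoc, ginv_comp by endpoints. apply comp_id'. endpoints.
Qed.

Lemma divD_mulD u : divD (mulD u) = u.
Proof. unfold divD. rewrite mulD_tgt, psi_phi_ob. unfold mulD. apply compK. endpoints. Qed.

Definition mulDn r u := Nat.iter r mulD u.
Definition divDn r u := Nat.iter r divD u.

Lemma mulDn_S' r u : mulDn (S r) u = mulDn r (mulD u).
Proof. apply Nat.iter_succ_r. Qed.

Lemma mulDn_add r s u : mulDn (r + s) u = mulDn r (mulDn s u).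
Proof. apply Nat.iter_add. Qed.

Lemma mulDn_src r u : src (mulDn r u) = src u.
Proof.
  induction r; auto. change (mulDn (S r) u) with (mulD (mulDn r u)). rewrite mulD_src; auto.
Qed.
Lemma divDn_src r u : src (divDn r u) = src u.
Proof.
  induction r; auto. change (divDn (S r) u) with (divD (divDn r u)). rewrite divD_src; auto.
Qed.
Hint Rewrite mulDn_src divDn_src : catdb.

Lemma mulDn_Dpow r u : mulDn r u = comp u (fmor incl (Dpow r (tgt u))).
Proof.
  induction r.
  - symmetry. apply comp_id.
  - change (mulDn (S r) u) with (mulD (mulDn r u)). rewrite IHr. unfold mulD.
    rewrite comp_assoc, <- incl_comp by endpoints. rewrite Dpow_S_r. do 3 f_equal. endpoints.
Qed.

Lemma mulDn_fprefix r u w : fprefix (mulDn r u) (mulDn r w) <-> fprefix u w.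
Proof.
  induction r; [tauto|]. change (mulDn (S r) ?v) with (mulD (mulDn r v)).
  rewrite mulD_fprefix. auto.
Qed.

Lemma fprefix_mulDn r u : fprefix u (mulDn r u).
Proof.
  induction r; [apply fprefix_refl|]. change (mulDn (S r) u) with (mulD (mulDn r u)).
  eapply fprefix_trans; [apply IHr|apply fprefix_mulD].
Qed.

Lemma mulDn_divDn r u : mulDn r (divDn r u) = u.
Proof.
  revert u; induction r; intros u. reflexivity.
  change (divDn (S r) u) with (divD (divDn r u)). rewrite mulDn_S', mulD_divD. apply IHr.
Qed.

Lemma divDn_mulDn r u : divDn r (mulDn r u) = u.
Proof.
  revert u; induction r; intros u. reflexivity.
  change (mulDn (S r) u) with (mulD (mulDn r u)).
  unfold divDn. rewrite Nat.iter_succ_r. rewrite divD_mulD. apply IHr.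
Qed.

Lemma fprefix_divDn r u : fprefix (divDn r u) u.
Proof. rewrite <- (mulDn_divDn r u) at 2. apply fprefix_mulDn. Qed.

Lemma mulDn_comp_l r h u : tgt h = src u -> mulDn r (comp h u) = comp h (mulDn r u).
Proof. intros H. rewrite !mulDn_Dpow, tgt_comp by auto. rewrite comp_assoc; endpoints. Qed.

Lemma mulDn_incl r (p : mor C) : mulDn r (fmor incl p) = fmor incl (mulDpow p r).
Proof. rewrite mulDn_Dpow. unfold mulDpow. rewrite incl_comp by endpoints. reflexivity. Qed.

Lemma mulDn_denominator (u : mor Frac) : exists n a, mulDn n u = fmor incl a.
Proof.
  destruct u as [[a n] R]. exists n, a. rewrite mulDn_Dpow. apply rfrac_decomp.
Qed.

Lemma fprefix_comp_incl (h : mor Frac) (p : mor C) : src p = tgt h ->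
  fprefix h (comp h (fmor incl p)).
Proof. intros H. exists p. auto. Qed.

Lemma fprefix_incl_iff (p q : mor C) : fprefix (fmor incl p) (fmor incl q) <-> prefix p q.
Proof.
  split; [|apply fprefix_incl].
  intros [z [Hz E]]. exists z. split; [symmetry; exact Hz|].
  apply incl_inj. rewrite E, incl_comp; auto.
Qed.

Lemma fprefix_comp_incl_iff (h : mor Frac) (p q : mor C) : src p = tgt h -> src q = tgt h ->
  fprefix (comp h (fmor incl p)) (comp h (fmor incl q)) <-> prefix p q.
Proof. intros Hp Hq. rewrite fprefix_comp_l by endpoints. apply fprefix_incl_iff. Qed.

Lemma divDn_idm_fprefix N (u : mor Frac) (a : mor C) :
  mulDn N u = fmor incl a -> fprefix (divDn N (idm (src u))) u.
Proof.
  intros E. apply (mulDn_fprefix N). rewrite mulDn_divDn, E.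
  assert (Ha : src a = src u) by (rewrite <- (mulDn_src N u), E; reflexivity).
  exists a. split; [endpoints|]. symmetry. apply id_comp'. exact (eq_sym Ha).
Qed.

Lemma common_lower_bound (u w : mor Frac) : src u = src w -> exists h, fprefix h u /\ fprefix h w.
Proof.
  intros H. destruct (mulDn_denominator u) as [n [a Ea]].
  destruct (mulDn_denominator w) as [m [b Eb]].
  exists (divDn (m + n) (idm (src u))). split.
  - apply (divDn_idm_fprefix _ _ (mulDpow a m)). rewrite mulDn_add, Ea. apply mulDn_incl.
  - rewrite H, Nat.add_comm. apply (divDn_idm_fprefix _ _ (mulDpow b n)).
    rewrite mulDn_add, Eb. apply mulDn_incl.
Qed.

Lemma fprefix_join (u w : mor Frac) : src u = src w ->
  exists m, fprefix u m /\ fprefix w m /\ forall c, fprefix u c -> fprefix w c -> fprefix m c.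
Proof.
  intros H. destruct (common_lower_bound u w H) as [h [[p [Hp ->]] [q [Hq ->]]]].
  destruct (prefix_lattice (tgt h) p q Hp Hq) as [[j [Hj [Hpj [Hqj Hjmin]]]] _].
  exists (comp h (fmor incl j)). rewrite !fprefix_comp_incl_iff by auto.
  split; [|split]; auto. intros c Hpc Hqc.
  destruct (fprefix_trans _ _ _ (fprefix_comp_incl h p Hp) Hpc) as [r [Hr ->]].
  rewrite fprefix_comp_incl_iff in * by endpoints. apply Hjmin; auto.
Qed.

Lemma prefix_mulDpow (p q : mor C) r : src q = src p -> len q <= r -> prefix q (mulDpow p r).
Proof.
  intros H Hl. unfold mulDpow. rewrite Dpow_nat.
  apply prefix_trans with (Dpow r (src q)); [apply prefix_Dpow; auto|].
  rewrite H. apply prefix_comp. endpoints.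
Qed.

Lemma fprefix_connected (u w : mor Frac) : src u = src w ->
  exists r, fprefix u (mulDn r w) /\ fprefix w (mulDn r u).
Proof.
  intros H. destruct (common_lower_bound u w H) as [h [[p [Hp ->]] [q [Hq ->]]]].
  exists (len p + len q). rewrite !mulDn_comp_l, !mulDn_incl by endpoints.
  rewrite !fprefix_comp_incl_iff by endpoints.
  split; apply prefix_mulDpow; try congruence; lia.
Qed.

(* If [w Delta^r = v q] and [v Delta^r = w p], then [v Delta^2r = v q phi^r(p)], so [q]
   is a prefix of [Delta^2r]. *)
Lemma fprefix_interval_finite (v : mor Frac) r : exists ws : list (mor Frac),
  forall w, fprefix v (mulDn r w) -> fprefix w (mulDn r v) -> In w ws.
Proof.
  exists (map (fun q => divDn r (comp v (fmor incl q)))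
              (short_morphisms (len (Dpow (r + r) (tgt v))))).
  intros w [q [Hq Eq]] [p [Hp Ep]].
  apply in_map_iff. exists q. split; [rewrite <- Eq; apply divDn_mulDn|].
  apply in_short_morphisms, prefix_len.
  assert (Tq : tgt q = phin_ob r (src p)).
  { assert (X := f_equal tgt Eq). rewrite mulDn_Dpow, !tgt_comp in X by endpoints.
    change (tgt (Dpow r (tgt w)) = tgt q) in X. rewrite Dpow_tgt in X. rewrite Hp. auto. }
  assert (E2r : mulDn (r + r) v = comp v (fmor incl (comp q (phin r p)))).
  { rewrite mulDn_add, Ep, mulDn_comp_l, mulDn_incl by endpoints. unfold mulDpow.
    rewrite Dpow_nat, incl_comp, <- comp_assoc, Hp, <- mulDn_Dpow, Eq by endpoints.
    rewrite comp_assoc, <- incl_comp by endpoints. reflexivity. }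
  rewrite mulDn_Dpow in E2r. apply comp_incl_inj in E2r; [|endpoints|endpoints].
  exists (phin r p). split; [endpoints|]. auto.
Qed.

(* Maximise the length of [p] among the [y = a p] in [S]; it is bounded by that of [a^-1 b]. *)
Lemma fprefix_bounded_maximal (S : mor Frac -> Prop) (a b : mor Frac) :
  (forall y, S y -> fprefix a y /\ fprefix y b) -> forall y0, S y0 ->
  exists y, S y /\ forall y', S y' -> fprefix y y' -> y' = y.
Proof.
  intros HS y0 Sy0. destruct (HS y0 Sy0) as [Hay0 Hy0b].
  destruct (fprefix_trans _ _ _ Hay0 Hy0b) as [qb [Hqb Eb]].
  destruct Hay0 as [p0 [Hp0 E0]].
  set (P := fun p : mor C => src p = tgt a /\ S (comp a (fmor incl p))).
  destruct (exists_max_measure P len (len qb) p0) as [p [[Hp Sp] pmax]].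
  - intros p [Hp Sp]. apply prefix_len. apply (fprefix_comp_incl_iff a); auto.
    rewrite <- Eb. apply HS, Sp.
  - split; [auto|]. rewrite <- E0. exact Sy0.
  - exists (comp a (fmor incl p)). split; [exact Sp|]. intros y' Sy' [z [Hz ->]].
    assert (Hpz : tgt p = src z) by (rewrite (tgt_comp Frac) in Hz by endpoints; auto).
    rewrite comp_assoc, <- incl_comp in Sy' by endpoints.
    assert (Pz : P (comp p z)) by (split; [rewrite src_comp by auto; exact Hp | exact Sy']).
    assert (Lz := pmax _ Pz).
    rewrite len_comp in Lz by auto.
    assert (Iz : is_id z) by (apply len_eq0; lia). apply is_id_idm in Iz.
    rewrite Iz, fid, <- Hpz. apply comp_id'. rewrite (tgt_comp Frac) by endpoints. reflexivity.
Qed.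

(** * The Helly graph *)

(* [m] is the join of [u Delta^-1] and [w Delta^-r]: a neighbour of [u] one step closer to [w]. *)
Lemma fprefix_step (u w : mor Frac) r : src u = src w ->
  fprefix u (mulDn (S r) w) -> fprefix w (mulDn (S r) u) ->
  exists m, src m = src u /\ fprefix u (mulD m) /\ fprefix m (mulD u) /\
    fprefix m (mulDn r w) /\ fprefix w (mulDn r m).
Proof.
  intros Huw H1 H2.
  assert (Hs : src (divD u) = src (divDn r w)) by (rewrite divD_src, divDn_src; auto).
  destruct (fprefix_join _ _ Hs) as [m [Hum [Hwm Hmin]]].
  exists m. split; [rewrite (fprefix_src _ _ Hum); apply divD_src|]. split; [|split; [|split]].
  - rewrite <- (mulD_divD u). apply mulD_fprefix. auto.
  - apply Hmin.
    + eapply fprefix_trans; [|apply fprefix_mulD].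
      rewrite <- (mulD_divD u) at 2. apply fprefix_mulD.
    + apply (mulDn_fprefix r). rewrite mulDn_divDn, <- mulDn_S'. auto.
  - apply Hmin; [|eapply fprefix_trans; [apply fprefix_divDn | apply fprefix_mulDn]].
    apply (proj1 (mulD_fprefix (divD u) (mulDn r w))). rewrite mulD_divD. exact H1.
  - rewrite <- (mulDn_divDn r w) at 1. apply mulDn_fprefix. auto.
Qed.

Lemma fprefix_intervals_meet (I : Type) (i0 : I) (a b : I -> mor Frac) :
  (forall i j, fprefix (a i) (b j)) -> exists y, forall i, fprefix (a i) y /\ fprefix y (b i).
Proof.
  intros Hab.
  set (S := fun y => fprefix (a i0) y /\ forall j, fprefix y (b j)).
  destruct (fprefix_bounded_maximal S (a i0) (b i0)) with (y0 := a i0)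
    as [y [[Hy0 Hyb] ymax]].
  { intros y [Hy Hyb]. auto. }
  { split; [apply fprefix_refl | auto]. }
  exists y. intros i. split; [|apply Hyb].
  assert (Hs : src y = src (a i)).
  { rewrite (fprefix_src _ _ Hy0), <- (fprefix_src _ _ (Hab i0 i0)).
    apply (fprefix_src _ _ (Hab i i0)). }
  destruct (fprefix_join _ _ Hs) as [m [Hym [Ham Hmin]]].
  assert (Sm : S m) by (split; [eapply fprefix_trans; eauto | intros j; apply Hmin; auto]).
  rewrite <- (ymax m Sm Hym). exact Ham.
Qed.

Section Graph.
Variable x0 : ob Frac.

Definition vertex : Type := {u : mor Frac | src u = x0}.

Lemma vertex_eq (u w : vertex) : proj1_sig u = proj1_sig w -> u = w.
Proof. destruct u as [u p], w as [w q]; simpl. intros ->. f_equal. apply proof_irrelevance. Qed.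

Definition adj (u w : vertex) : Prop :=
  proj1_sig u <> proj1_sig w /\
  fprefix (proj1_sig u) (mulD (proj1_sig w)) /\ fprefix (proj1_sig w) (mulD (proj1_sig u)).

Lemma dist_le_adj r (u w : vertex) : dist_le adj r u w <->
  fprefix (proj1_sig u) (mulDn r (proj1_sig w)) /\ fprefix (proj1_sig w) (mulDn r (proj1_sig u)).
Proof.
  revert u w; induction r as [|r IH]; intros u w.
  - simpl. split; [intros ->; split; apply fprefix_refl|].
    intros [H1 H2]. apply vertex_eq, fprefix_antisym; auto.
  - simpl dist_le. change (mulDn (S r) ?v) with (mulD (mulDn r v)). split.
    + intros [H | [w' [[_ [A1 A2]] H]]]; apply IH in H; destruct H as [H1 H2]; split.
      * eapply fprefix_trans; [apply H1 | apply fprefix_mulD].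
      * eapply fprefix_trans; [apply H2 | apply fprefix_mulD].
      * eapply fprefix_trans; [apply A1 | apply mulD_fprefix; auto].
      * change (mulD (mulDn r ?v)) with (mulDn (S r) v). rewrite mulDn_S'.
        eapply fprefix_trans; [apply H2 | apply mulDn_fprefix; auto].
    + change (mulD (mulDn r ?v)) with (mulDn (S r) v). intros [H1 H2].
      destruct u as [u Hu], w as [w Hw]; cbn [proj1_sig] in *.
      destruct (fprefix_step u w r ltac:(congruence) H1 H2) as [m [Hm [F1 [F2 [F3 F4]]]]].
      destruct (classic (m = u)) as [->|Hmu].
      * left. apply IH. auto.
      * right. exists (exist _ m (eq_trans Hm Hu)). split; [split; simpl; auto|].
        apply IH. simpl. auto.
Qed.

Lemma ball_adj r (c u : vertex) : ball adj c r u <->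
  fprefix (divDn r (proj1_sig c)) (proj1_sig u) /\ fprefix (proj1_sig u) (mulDn r (proj1_sig c)).
Proof.
  unfold ball. rewrite dist_le_adj, <- (mulDn_fprefix r (divDn r _)), mulDn_divDn. tauto.
Qed.

Definition vertex_idm : vertex := exist _ (@idm Frac x0) (src_id Frac x0).

Lemma adj_helly : helly_graph adj.
Proof.
  split; [|split].
  - split; [intros u w [H1 [H2 H3]]; split; auto | intros u [H _]; auto].
  - split; [constructor; exact vertex_idm|].
    intros [u Hu] [w Hw]. destruct (fprefix_connected u w ltac:(congruence)) as [r Hr].
    exists r. apply dist_le_adj. exact Hr.
  - intros I c r Hmeet.
    destruct (classic (inhabited I)) as [[i0]|NI].
    2: { exists vertex_idm. intros i. exfalso. apply NI. constructor. exact i. }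
    destruct (fprefix_intervals_meet I i0 (fun i => divDn (r i) (proj1_sig (c i)))
                                            (fun i => mulDn (r i) (proj1_sig (c i)))) as [y Hy].
    { intros i j. destruct (Hmeet i j) as [u [Hi Hj]]. apply ball_adj in Hi, Hj.
      eapply fprefix_trans; [apply Hi | apply Hj]. }
    assert (Hsy : src y = x0).
    { rewrite (fprefix_src _ _ (proj1 (Hy i0))), divDn_src. apply (proj2_sig (c i0)). }
    exists (exist _ y Hsy). intros i. apply ball_adj. apply Hy.
Qed.

Lemma lmul_src (g : mor Frac) (v : vertex) : in_isotropy x0 g -> src (comp g (proj1_sig v)) = x0.
Proof. intros [Hs Ht]. destruct v as [v Hv]; cbn [proj1_sig]. rewrite src_comp; congruence. Qed.

Definition lmul (g : mor Frac) (v : vertex) : vertex :=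
  match excluded_middle_informative (in_isotropy x0 g) with
  | left Hg => exist _ (comp g (proj1_sig v)) (lmul_src g v Hg)
  | right _ => v
  end.

Lemma lmul_val g v : in_isotropy x0 g -> proj1_sig (lmul g v) = comp g (proj1_sig v).
Proof.
  intros Hg. unfold lmul. destruct (excluded_middle_informative _); [reflexivity | contradiction].
Qed.

Lemma lmul_isotropy_action : isotropy_action x0 adj lmul.
Proof.
  split; [|split].
  - intros v. apply vertex_eq. rewrite lmul_val by (split; [apply src_id | apply tgt_id]).
    apply id_comp'. destruct v; cbn [proj1_sig]; auto.
  - intros g h v [Hgs Hgt] [Hhs Hht]. apply vertex_eq.
    rewrite !lmul_val by (split; rewrite ?src_comp, ?tgt_comp; congruence).
    destruct v as [v Hv]. cbn [proj1_sig]. rewrite comp_assoc; congruence.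
  - intros g u w Hg. unfold adj. rewrite !lmul_val by auto.
    destruct Hg as [Hgs Hgt], u as [u Hu], w as [w Hw]; cbn [proj1_sig].
    rewrite !mulD_comp_l, !fprefix_comp_l by (rewrite ?mulD_src; congruence).
    split; intros [Hne H]; split; auto; intros E; apply Hne.
    + apply (comp_cancel_l _ Frac_groupoid g); auto; congruence.
    + congruence.
Qed.

Lemma lmul_proper : proper_action x0 adj lmul.
Proof.
  intros [v Hv] r. destruct (fprefix_interval_finite v r) as [ws Hws].
  exists (map (fun w => comp w (ginv Frac_groupoid v)) ws).
  intros g Hg Hd. apply dist_le_adj in Hd. rewrite lmul_val in Hd by auto. simpl in Hd.
  apply in_map_iff. exists (comp g v). split; [|apply Hws; apply Hd].
  destruct Hg as [_ Hgt]. apply compK. congruence.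
Qed.

Lemma objects_in_simples o : In o (map src simples).
Proof. rewrite <- (src_id C o). apply in_map, simples_complete, idm_simple. Qed.

(* One representative per target object: two vertices with the same target differ by an
   element of the isotropy group. *)
Lemma lmul_cocompact : cocompact_action x0 lmul.
Proof.
  set (pick := fun o => epsilon (inhabits vertex_idm) (fun w : vertex => tgt (proj1_sig w) = o)).
  exists (map pick (map src simples)). intros [w Hw].
  assert (Hk : tgt (proj1_sig (pick (tgt w))) = tgt w).
  { apply (epsilon_spec (inhabits vertex_idm) (fun w' : vertex => tgt (proj1_sig w') = tgt w)).
    exists (exist _ w Hw). reflexivity. }
  destruct (pick (tgt w)) as [k Hks] eqn:Ek. cbn [proj1_sig] in Hk.
  set (g := comp w (ginv Frac_groupoid k)).
  assert (Hg : in_isotropy x0 g).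
  { unfold g. split; [rewrite src_comp by endpoints; exact Hw|].
    rewrite tgt_comp, ginv_tgt by endpoints. exact Hks. }
  exists (exist _ k Hks), g. split; [|split; [exact Hg|]].
  - rewrite <- Ek. apply in_map, objects_in_simples.
  - apply vertex_eq. rewrite lmul_val by exact Hg. cbn [proj1_sig]. unfold g.
    symmetry. apply compKV. congruence.
Qed.

Lemma lmul_acts_geometrically : acts_geometrically x0 adj lmul.
Proof. split; [apply lmul_isotropy_action | split; [apply lmul_proper | apply lmul_cocompact]]. Qed.
End Graph.

Lemma isotropy_acts_on_helly_graph (Env : Cat) (iota : Functor C Env)
  (HE : enveloping C Env iota) (x : ob Env) :
  exists (V : Type) (adj : V -> V -> Prop) (act : mor Env -> V -> V),
    helly_graph adj /\ acts_geometrically x adj act.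
Proof.
  destruct (enveloping_iso C Env Frac iota Frac_groupoid incl (eval Env iota (proj1 HE)) HE)
    as [F [GF_ob [GF_mor FG_mor]]]; [reflexivity | apply eval_incl | apply Frac_generated |].
  exists (vertex (fob F x)), (adj (fob F x)), (fun g => lmul (fob F x) (fmor F g)).
  split; [apply adj_helly|].
  apply (acts_geometrically_transfer _ _ F (eval Env iota (proj1 HE))); auto.
  apply lmul_acts_geometrically.
Qed.
End Garside.

Theorem theorem4p9 (C : Cat) (HC : garside_finite_type C)
  (E : Cat) (iota : Functor C E) (HE : enveloping C E iota) (x : ob E) :
  exists (V : Type) (adj : V -> V -> Prop) (act : mor E -> V -> V),
    helly_graph adj /\ acts_geometrically x adj act.
Proof.
  destruct HC as [phi [Delta [[Haut [[HDelta HDelta_nat] [[len [Hlen_comp Hlen0]]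
                   [Hcanc [Hatom Hlat]]]]] [simples Hsimples]]]].
  destruct Haut as [psi [Hpsi_phi_ob [Hphi_psi_ob [_ Hphi_psi_mor]]]].
  apply (isotropy_acts_on_helly_graph C phi psi Hpsi_phi_ob Hphi_psi_ob Hphi_psi_mor Delta
           (fun o => proj1 (HDelta o)) (fun o => proj2 (HDelta o)) HDelta_nat
           len Hlen_comp Hlen0 Hcanc Hatom (fun o => proj1 (Hlat o)) simples Hsimples E iota HE).
Qed.
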